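(* Let the initial shared state be the two-qutrit Bell-diagonal state of a qutrit depolarizing channel with parameter $p=p_{00}>1/3$, i.e. Bell probabilities $q_{00}=p$ and $q_{nm}=(1-p)/8$ for $(n,m)\ne(0,0)$. Then the mCAEPP with $m$ carriers per round, conditioned on successful post-selection in every round, purifies the shared state to unit asymptotic fidelity: the fidelity $q_{00}$ of the accepted state tends to $1$ in the limit of many rounds and a large number $m$ of carriers per round.
   Context: Bell-diagonal two-qutrit states are described by probabilities $q=(q_{st})_{s,t\in\{0,1,2\}}$ on the Bell states $|\Phi^{s,t}\rangle=\frac1{\sqrt3}\sum_j e^{2\pi i tj/3}|j,(j+s)\bmod3\rangle$; the fidelity is $q_{00}$. One round of the mCAEPP with $m$ carriers (built from the stabilizer generators $X_1X_m^2,\dots,X_{m-1}X_m^2,Z_0Z_1\cdots Z_m$) acts on $q$ as follows. Pre-processing by local unitaries relabels the probabilities to $r=(r_{00},r_{01},r_{02},r_{10},r_{11},r_{12},r_{20},r_{21},r_{22})=(q_{00},q_{21},q_{22},q_{10},q_{11},q_{12},q_{20},q_{01},q_{02})$. Random error labels $(x_0,z_0)$ with $P(x_0=i,z_0=j)=r_{ij}$ (shared pair) and independent i.i.d. $(x_k,z_k)$, $k=1,\dots,m$ (carriers, passing through the same depolarizing channel) with $P(x_k=0,z_k=0)=p$ and $P(x_k=i,z_k=j)=(1-p)/8$ otherwise, all in $\{0,1,2\}$. The round succeeds iff $z_i\equiv z_m \pmod 3$ for $i=1,\dots,m-1$ and $\sum_{j=0}^m x_j\equiv0\pmod3$; the output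 Bell label is $(s,t)=(x_0,(z_0-z_1)\bmod 3)$, and the new distribution is $q'_{st}=P(\text{success},s,t)/P(\text{success})$. Rounds are iterated on the accepted state. *)

From mathcomp Require Import all_boot all_order all_algebra.
From mathcomp Require Import reals.
Set Implicit Arguments. Unset Strict Implicit. Unset Printing Implicit Defensive.
Import Order.TTheory GRing.Theory Num.Theory.
Local Open Scope ring_scope.

Section MCAEPP.
Variable R : realType.

(* Bell labels (s,t), s,t in {0,1,2}; a Bell-diagonal state is q : lbl -> lbl -> R,
   q s t = q_{st}; the fidelity is q 0 0. *)
Definition lbl := 'I_3.

Definition depol (p : R) (s t : lbl) : R :=
  if ((s : nat) == 0%N) && ((t : nat) == 0%N) then p else (1 - p) / 8.

(* Pre-processing relabelling:
   (r00,r01,r02,r10,r11,r12,r20,r21,r22) = (q00,q21,q22,q10,q11,q12,q20,q01,q02). *)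
Definition relabel (q : lbl -> lbl -> R) (s t : lbl) : R :=
  if (t : nat) == 0%N then q s t
  else if (s : nat) == 0%N then q (inord 2) t
  else if (s : nat) == 2%N then q (inord 0) t
  else q s t.

Definition carrier (p : R) (e : lbl * lbl) : R :=
  if ((e.1 : nat) == 0%N) && ((e.2 : nat) == 0%N) then p else (1 - p) / 8.

Definition success (m : nat) (x0 : lbl) (c : m.-tuple (lbl * lbl)) : bool :=
  all (fun e : lbl * lbl => e.2 == (last (x0, x0) c).2) c &&
  ((x0 + sumn (map (fun e : lbl * lbl => (e.1 : nat)) c)) %% 3 == 0)%N.

Definition out_t (m : nat) (z0 : lbl) (c : m.-tuple (lbl * lbl)) : nat :=
  ((z0 + 3 - (nth (z0, z0) c 0).2) %% 3)%N.

(* P(success, s, t) for one round with m carriers. *)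
Definition joint (p : R) (m : nat) (q : lbl -> lbl -> R) (s t : lbl) : R :=
  \sum_(x0 : lbl) \sum_(z0 : lbl) \sum_(c : m.-tuple (lbl * lbl))
     relabel q x0 z0 * \prod_(e <- c) carrier p e *
     ((success x0 c && (x0 == s) && (out_t z0 c == (t : nat)))%:R).

Definition psucc (p : R) (m : nat) (q : lbl -> lbl -> R) : R :=
  \sum_(s : lbl) \sum_(t : lbl) joint p m q s t.

Definition mcaepp_round (p : R) (m : nat) (q : lbl -> lbl -> R) (s t : lbl) : R :=
  joint p m q s t / psucc p m q.

Definition state_after (p : R) (m n : nat) : lbl -> lbl -> R :=
  iter n (mcaepp_round p m) (depol p).

Definition fidelity (q : lbl -> lbl -> R) : R := q (inord 0) (inord 0).

End MCAEPP.

From mathcomp Require Import all_boot all_order all_algebra.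
From mathcomp Require Import reals ring lra topology normedtype sequences.
Set Implicit Arguments. Unset Strict Implicit. Unset Printing Implicit Defensive.
Import Order.TTheory GRing.Theory Num.Theory numFieldNormedType.Exports.
Local Open Scope ring_scope.

(* A round acts linearly on the unnormalised Bell weights.  With a = (1-p)/8,
   let G_s be the weight of carrier strings whose z-labels are all 0 and whose
   x-labels sum to -s mod 3, and let the leak c = a (3a)^(m-1) be the weight
   of strings with a common nonzero z-label; then the joint weight of the output label (s,t) is
   G_s r_st + c * sum_(t' <> t) r_st' for the relabelled state r.  One has
   G_0 - G_1 = (p - a)^m, and 3a < p - a exactly when p > 1/3, so for many
   carriers c is negligible against G_0 - G_1.  The potential Psi, a weighted
   sum of the non-fidelity weights with extra weight G_0 - G_1 on q_21, q_22
   (which feed the next q_01, q_02 with gain G_0), then satisfies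
   Psi' <= theta G_0 Psi + 4 G_0 c q_00 with theta = (3 G_0 + G_1)/(4 G_0) < 1,
   while q_00' >= G_0 q_00.  Hence Psi/q_00 is eventually at most about
   16 c G_0/(G_0 - G_1), and the infidelity 1 - q_00 <= Psi/(2 G_0) is
   eventually O((3a/(p - a))^m). *)

Local Notation i0 := (@Ordinal 3 0 isT).
Local Notation i1 := (@Ordinal 3 1 isT).
Local Notation i2 := (@Ordinal 3 2 isT).

Lemma eventually_expr_le (R : archiRealFieldType) (x eta : R) : 0 <= x -> x < 1 -> 0 < eta ->
  exists N : nat, forall n : nat, (N <= n)%N -> x ^+ n <= eta.
Proof.
move=> x_ge0 x_lt1 eta_gt0; rewrite -(ger0_norm x_ge0) in x_lt1.
have [N _ hN] := cvgr0_norm_le _ (cvg_expr x_lt1) _ eta_gt0.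
by exists N => n /hN; rewrite normrX ger0_norm.
Qed.

Lemma big_tuple_cons (V : nmodType) (T : finType) k (F : k.+1.-tuple T -> V) :
  \sum_(c : k.+1.-tuple T) F c = \sum_(e : T) \sum_(c : k.-tuple T) F [tuple of e :: c].
Proof.
rewrite pair_big /= (reindex (fun x : T * k.-tuple T => [tuple of x.1 :: x.2])) /=.
  by apply: eq_bigr => -[e c].
exists (fun c : k.+1.-tuple T => (thead c, [tuple of behead c])).
  by move=> [e c] _ /=; congr pair; apply: val_inj.
by move=> c _; apply: val_inj => /=; case/tupleP: c.
Qed.

Lemma big_ord3 (V : nmodType) (F : 'I_3 -> V) : \sum_i F i = F i0 + F i1 + F i2.
Proof. by rewrite !big_ord_recr big_ord0 /= add0r; congr (F _ + F _ + F _); apply: val_inj. Qed.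

Lemma ord3_cases (t : 'I_3) : [\/ t = i0, t = i1 | t = i2].
Proof. by case: t => -[|[|[|//]]] ?; [constructor 1 | constructor 2 | constructor 3]; apply: val_inj. Qed.

Lemma inord0_lbl : inord 0 = i0 :> lbl. Proof. by apply: val_inj; rewrite /= inordK. Qed.
Lemma inord2_lbl : inord 2 = i2 :> lbl. Proof. by apply: val_inj; rewrite /= inordK. Qed.

Lemma big_pair (V : nmodType) (I J : finType) (F : I * J -> V) :
  \sum_e F e = \sum_i \sum_j F (i, j).
Proof. by rewrite pair_bigA; apply: eq_bigr => -[]. Qed.

Lemma all_eq_at_mem (T U : eqType) (f : T -> U) (s : seq T) (x y : T) :
  x \in s -> y \in s -> all (fun g => f g == f x) s = all (fun g => f g == f y) s.
Proof.
wlog suff: x y / y \in s -> all (fun g => f g == f x) s -> all (fun g => f g == f y) s.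
  by move=> H hx hy; apply/idP/idP; apply: H.
by move=> hy /allP A; apply/allP => g /A /eqP ->; rewrite eq_sym A.
Qed.

Section AcceptWeight.
Variables (R : realType) (p : R).
Local Notation a := ((1 - p) / 8).

Definition parity_ok (r : nat) (c : seq (lbl * lbl)) : bool :=
  ((r + sumn [seq (e.1 : nat) | e : lbl * lbl <- c]) %% 3 == 0)%N.

Definition accept_weight m (z : lbl) (r : nat) : R :=
  \sum_(c : m.-tuple (lbl * lbl))
    \prod_(e <- c) carrier p e * (all (fun e => e.2 == z) c && parity_ok r c)%:R.

Lemma accept_weight0 z r : accept_weight 0 z r = (r %% 3 == 0)%N%:R.
Proof.
rewrite /accept_weight (big_pred1 [tuple]) => [|c]; last exact/esym/eqP/tuple0.
by rewrite big_nil mul1r /parity_ok addn0.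
Qed.

Lemma accept_weightS m z r :
  accept_weight m.+1 z r = \sum_(x : lbl) carrier p (x, z) * accept_weight m z (r + x).
Proof.
rewrite /accept_weight big_tuple_cons big_pair; apply: eq_bigr => x _.
rewrite (bigD1 z) //= [X in _ + X]big1 ?addr0; last first.
  by move=> z' z'z; rewrite big1 // => c _; rewrite /= (negbTE z'z) mulr0.
rewrite mulr_sumr; apply: eq_bigr => c _.
by rewrite big_cons eqxx /parity_ok /= addnA mulrA.
Qed.

Lemma one_residue_mod3 r :
  \sum_(x : lbl) ((r + x) %% 3 == 0)%N%:R = 1 :> R.
Proof.
rewrite big_ord3 /= -!(modnDml r).
have : (r %% 3 < 3)%N by rewrite ltn_mod.
by case: (r %% 3)%N => [|[|[|]]] //= _; rewrite ?addr0 ?add0r.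
Qed.

Lemma carrier_z_neq0 (x z : lbl) : (z : nat) != 0%N -> carrier p (x, z) = a.
Proof. by move=> /negbTE z0; rewrite /carrier /= z0 andbF. Qed.

Lemma sum_accept_weight_z_neq0 m (z : lbl) r : (z : nat) != 0%N ->
  \sum_(x : lbl) accept_weight m z (r + x) = (3 * a) ^+ m.
Proof.
move=> z0; elim: m r => [|m IHm] r.
  by under eq_bigr do rewrite accept_weight0; rewrite one_residue_mod3.
have step x : accept_weight m.+1 z (r + x) = a * \sum_(y : lbl) accept_weight m z (r + x + y).
  by rewrite accept_weightS mulr_sumr; apply: eq_bigr => y _; rewrite carrier_z_neq0.
under eq_bigr do rewrite step IHm.
by rewrite sumr_const card_ord -mulr_natl exprS; ring.
Qed.

Lemma accept_weight_z_neq0 m (z : lbl) r : (z : nat) != 0%N ->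
  accept_weight m.+1 z r = a * (3 * a) ^+ m.
Proof.
move=> z0; rewrite accept_weightS -(sum_accept_weight_z_neq0 m r z0) mulr_sumr.
by apply: eq_bigr => x _; rewrite carrier_z_neq0.
Qed.

(* [p + 2a] and [p - a] are the Fourier coefficients over Z/3 of the x-label
   law (p, a, a) of a carrier with z-label 0. *)
Definition parity_weight m (r : nat) : R :=
  if (r %% 3 == 0)%N then ((p + 2 * a) ^+ m + 2 * (p - a) ^+ m) / 3
  else ((p + 2 * a) ^+ m - (p - a) ^+ m) / 3.

Lemma accept_weight_z0 m r : accept_weight m i0 r = parity_weight m r.
Proof.
elim: m r => [|m IHm] r.
  by rewrite accept_weight0 /parity_weight !expr0; case: ifP => _ /=; field.
rewrite accept_weightS big_ord3 !IHm /parity_weight /carrier /= -!(modnDml r) addn0.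
have : (r %% 3 < 3)%N by rewrite ltn_mod.
by case: (r %% 3)%N => [|[|[|]]] //= _; rewrite !exprS; field.
Qed.
End AcceptWeight.

Section Joint.
Variables (R : realType) (p : R).

Lemma success_out_tE k x0 z0 (t : lbl) (c : k.+1.-tuple (lbl * lbl)) :
  (success x0 c && (out_t z0 c == t))%:R = \sum_(z : lbl)
    ((z0 + 3 - z) %% 3 == t)%N%:R * (all (fun e => e.2 == z) c && parity_ok x0 c)%:R :> R.
Proof.
case/tupleP: c => e c; rewrite /success /out_t [X in all _ X]/= [last _ _]/=.
rewrite (all_eq_at_mem (fun g => g.2) (mem_last e c) (mem_head e c)).
rewrite (bigD1 e.2) //= [X in _ + X]big1 ?addr0 => [|z ez]; last first.
  by rewrite [e.2 == z]eq_sym (negbTE ez) mulr0.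
by rewrite eqxx -natrM mulnb andbC.
Qed.

Lemma joint_accept_weight k q s t : joint p k.+1 q s t = \sum_(z0 : lbl) relabel q s z0 *
  \sum_(z : lbl) ((z0 + 3 - z) %% 3 == t)%N%:R * accept_weight p k.+1 z s.
Proof.
rewrite /joint (bigD1 s) //= [X in _ + X]big1 ?addr0 => [|x0 xs]; last first.
  by rewrite big1 // => z0 _; rewrite big1 // => c _; rewrite (negbTE xs) andbF mulr0.
apply: eq_bigr => z0 _.
under eq_bigr do rewrite eqxx andbT success_out_tE -mulrA.
rewrite -mulr_sumr; congr (_ * _).
under eq_bigr do rewrite mulr_sumr.
rewrite exchange_big; apply: eq_bigr => z _.
by rewrite /accept_weight mulr_sumr; apply: eq_bigr => c _; rewrite mulrCA.
Qed.
End Joint.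

Lemma potential_contraction (R : realFieldType) (G0 G1 c u V Y w X : R) :
  0 <= G1 -> G1 < G0 -> 0 <= c -> 8 * c <= G0 - G1 ->
  0 <= V -> 0 <= Y -> 0 <= w -> 0 <= X ->
  (3 * G0 - G1) * ((G1 + c) * Y + 2 * c * w) +
    2 * G0 * ((2 * c * u + (G0 + c) * V) + (G1 * w + c * Y) + (G1 + 2 * c) * X)
  <= (G0 - (G0 - G1) / 4) * ((3 * G0 - G1) * V + 2 * G0 * (Y + w + X)) + 4 * G0 * c * u.
Proof.
move=> hG1 hG hc hcD hV hY hw hX.
have cV : 0 <= (G0 - (G0 - G1) / 4) * (3 * G0 - G1) - 2 * G0 * (G0 + c) by nra.
have cY : 0 <= 2 * G0 * (G0 - (G0 - G1) / 4) - (3 * G0 - G1) * (G1 + c) - 2 * G0 * c by nra.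
have cw : 0 <= 2 * G0 * (G0 - (G0 - G1) / 4) - 2 * c * (3 * G0 - G1) - 2 * G0 * G1 by nra.
have cX : 0 <= 2 * G0 * (G0 - (G0 - G1) / 4) - 2 * G0 * (G1 + 2 * c) by nra.
have := mulr_ge0 cV hV; have := mulr_ge0 cY hY; have := mulr_ge0 cw hw; have := mulr_ge0 cX hX.
lra.
Qed.

Definition potential (R : ringType) (G0 G1 : R) (q : lbl -> lbl -> R) : R :=
  (3 * G0 - G1) * (q i2 i1 + q i2 i2) +
  2 * G0 * (q i0 i1 + q i0 i2 + q i2 i0 + \sum_t q i1 t).

Lemma potential_ge0 (R : realFieldType) (G0 G1 : R) q : 0 <= G1 <= G0 ->
  (forall s t, 0 <= q s t) -> 0 <= potential G0 G1 q.
Proof.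
move=> /andP[G1_ge0 G1_le_G0] q_ge0; rewrite /potential.
have hV : 0 <= 3 * G0 - G1 by lra.
have hW : 0 <= 2 * G0 by lra.
by apply: addr_ge0; apply: mulr_ge0 => //; rewrite !addr_ge0 // sumr_ge0.
Qed.

Lemma one_sub_fidelity_le (R : realFieldType) (G0 G1 K : R) q : 0 <= G1 <= G0 -> 0 <= K ->
  (forall s t, 0 <= q s t) -> \sum_s \sum_t q s t = 1 ->
  potential G0 G1 q <= K * q i0 i0 -> 2 * G0 * (1 - q i0 i0) <= K.
Proof.
move=> /andP[G1_ge0 G1_le_G0] K_ge0 q_ge0 q_sum1 hK.
have u_le1 : q i0 i0 <= 1.
  rewrite -q_sum1 (bigD1 i0) //= (bigD1 i0) //= -addrA lerDl.
  by rewrite addr_ge0 ?sumr_ge0 // => s _; rewrite sumr_ge0.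
apply: le_trans (le_trans hK (ler_piMr K_ge0 u_le1)).
move: q_sum1; rewrite /potential !big_ord3 => q_sum1.
have : 0 <= (G0 - G1) * (q i2 i1 + q i2 i2).
  by apply: mulr_ge0; rewrite ?subr_ge0 ?addr_ge0.
have := congr1 (fun x => G0 * x) q_sum1.
lra.
Qed.

Section Round.
Variables (R : realType) (p : R) (k : nat).
Local Notation a := ((1 - p) / 8).
Local Notation G0 := (parity_weight p k.+1 0).
Local Notation G1 := (parity_weight p k.+1 1).
Local Notation c := (a * (3 * a) ^+ k).

Lemma joint_row q s t : joint p k.+1 q s t =
  (parity_weight p k.+1 s - c) * relabel q s t + c * \sum_(z : lbl) relabel q s z.
Proof.
rewrite joint_accept_weight !big_ord3 !accept_weight_z0 !accept_weight_z_neq0 //.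
by case: (ord3_cases t) => -> /=; ring.
Qed.

Lemma joint00 q : joint p k.+1 q i0 i0 = G0 * q i0 i0 + c * (q i2 i1 + q i2 i2).
Proof. by rewrite joint_row big_ord3 /relabel /= inord2_lbl; ring. Qed.

Lemma potential_joint q : potential G0 G1 (joint p k.+1 q) =
  (3 * G0 - G1) * ((G1 + c) * (q i0 i1 + q i0 i2) + 2 * c * q i2 i0) +
  2 * G0 * ((2 * c * q i0 i0 + (G0 + c) * (q i2 i1 + q i2 i2)) +
            (G1 * q i2 i0 + c * (q i0 i1 + q i0 i2)) + (G1 + 2 * c) * \sum_t q i1 t).
Proof.
rewrite /potential !big_ord3 !joint_row !big_ord3 /relabel /= inord0_lbl inord2_lbl.
by rewrite (_ : parity_weight p k.+1 2 = G1) //; ring.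
Qed.

Hypotheses (p_gt0 : 0 < p) (p_le1 : p <= 1).

Lemma a_ge0 : 0 <= a.
Proof. by have := p_le1; lra. Qed.

Lemma carrier_ge0 e : 0 <= carrier p e.
Proof. by rewrite /carrier; case: ifP => _; [exact: ltW | exact: a_ge0]. Qed.

Lemma joint_ge0 q s t : (forall s t, 0 <= q s t) -> 0 <= joint p k.+1 q s t.
Proof.
move=> q_ge0; do 3!(apply: sumr_ge0 => ? _).
apply: mulr_ge0 (ler0n _ _); apply: mulr_ge0; last by apply: prodr_ge0 => e _; exact: carrier_ge0.
by rewrite /relabel; repeat case: ifP => _.
Qed.

Lemma leak_ge0 : 0 <= c.
Proof. exact: mulr_ge0 a_ge0 (exprn_ge0 _ (mulr_ge0 (ler0n _ 3) a_ge0)). Qed.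

Hypotheses (G1_ge0 : 0 <= G1) (G1_lt_G0 : G1 < G0) (leak_le : 8 * c <= G0 - G1).
Local Notation theta := ((3 * G0 + G1) / (4 * G0)).

Lemma G0_gt0 : 0 < G0.
Proof. exact: le_lt_trans G1_lt_G0. Qed.

Lemma theta_ge0 : 0 <= theta.
Proof. by apply: divr_ge0; move: G0_gt0 G1_ge0; lra. Qed.

Lemma theta_lt1 : theta < 1.
Proof. by rewrite ltr_pdivrMr; move: G0_gt0 G1_lt_G0; lra. Qed.

Lemma joint00_ge q : (forall s t, 0 <= q s t) -> G0 * q i0 i0 <= joint p k.+1 q i0 i0.
Proof. by move=> q_ge0; rewrite joint00 lerDl mulr_ge0 ?addr_ge0 ?leak_ge0. Qed.

Lemma potential_joint_le q K : (forall s t, 0 <= q s t) -> 0 <= K ->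
  potential G0 G1 q <= K * q i0 i0 ->
  potential G0 G1 (joint p k.+1 q) <=
    (theta * K + 4 * c) * joint p k.+1 q i0 i0.
Proof.
move=> q_ge0 K_ge0 hK.
have D4_le : 0 <= G0 - (G0 - G1) / 4 by move: G1_ge0 G1_lt_G0; lra.
have V_ge0 : 0 <= q i2 i1 + q i2 i2 by rewrite addr_ge0.
have Y_ge0 : 0 <= q i0 i1 + q i0 i2 by rewrite addr_ge0.
have X_ge0 : 0 <= \sum_t q i1 t by rewrite sumr_ge0.
rewrite potential_joint.
apply: le_trans (potential_contraction (q i0 i0) G1_ge0 G1_lt_G0 leak_ge0 leak_le
                   V_ge0 Y_ge0 (q_ge0 _ _) X_ge0) _.
apply: (le_trans (lerD (ler_wpM2l D4_le hK) (lexx _))).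
have -> : (G0 - (G0 - G1) / 4) * (K * q i0 i0) + 4 * G0 * c * q i0 i0 =
          ((3 * G0 + G1) / (4 * G0) * K + 4 * c) * (G0 * q i0 i0).
  by field; rewrite gt_eqF ?G0_gt0.
apply: ler_wpM2l (joint00_ge q_ge0).
by rewrite addr_ge0 // mulr_ge0 // ?theta_ge0 ?leak_ge0.
Qed.

Lemma round_invariant q K : (forall s t, 0 <= q s t) -> 0 < q i0 i0 -> 0 <= K ->
  potential G0 G1 q <= K * q i0 i0 ->
  let q' := mcaepp_round p k.+1 q in
  [/\ forall s t, 0 <= q' s t, 0 < q' i0 i0, \sum_s \sum_t q' s t = 1 &
      potential G0 G1 q' <= (theta * K + 4 * c) * q' i0 i0].
Proof.
move=> q_ge0 u_gt0 K_ge0 hK q'.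
have J_ge0 s t := joint_ge0 s t q_ge0.
have J00_gt0 : 0 < joint p k.+1 q i0 i0.
  exact: lt_le_trans (mulr_gt0 G0_gt0 u_gt0) (joint00_ge q_ge0).
have P_gt0 : 0 < psucc p k.+1 q.
  apply: (lt_le_trans J00_gt0); rewrite /psucc (bigD1 i0) //= (bigD1 i0) //= -addrA lerDl.
  by rewrite addr_ge0 ?sumr_ge0 // => s _; rewrite sumr_ge0.
rewrite /q' /mcaepp_round; split.
- by move=> s t; apply: divr_ge0; [exact: J_ge0 | exact: ltW].
- exact: divr_gt0.
- by under eq_bigr do rewrite -mulr_suml; rewrite -mulr_suml divff ?gt_eqF.
have -> : potential G0 G1 (fun s t => joint p k.+1 q s t / psucc p k.+1 q) =
          potential G0 G1 (joint p k.+1 q) / psucc p k.+1 q.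
  by rewrite /potential -mulr_suml; ring.
rewrite [_ * (_ / psucc _ _ _)]mulrA ler_pM2r ?invr_gt0 //.
exact: potential_joint_le.
Qed.

Local Notation K0 := (potential G0 G1 (depol p) / p).

Lemma depol_ge0 s t : 0 <= depol p s t.
Proof. by rewrite /depol; case: ifP => _; [exact: ltW | exact: a_ge0]. Qed.

Lemma depol_sum1 : \sum_s \sum_t depol p s t = 1.
Proof. by rewrite !big_ord3 /depol /=; lra. Qed.

Lemma G_bounds : 0 <= G1 <= G0.
Proof. by rewrite G1_ge0 ltW. Qed.

Lemma K0_ge0 : 0 <= K0.
Proof. by apply: divr_ge0; [exact: potential_ge0 G_bounds depol_ge0 | exact: ltW]. Qed.

Local Notation bound n := (theta ^+ n * K0 + 16 * c * G0 / (G0 - G1)).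

Lemma tail_ge0 : 0 <= 16 * c * G0 / (G0 - G1).
Proof.
apply: divr_ge0; last by rewrite subr_ge0 ltW.
exact: mulr_ge0 (mulr_ge0 _ leak_ge0) (ltW G0_gt0).
Qed.

Lemma bound_ge0 n : 0 <= bound n.
Proof. exact: addr_ge0 (mulr_ge0 (exprn_ge0 _ theta_ge0) K0_ge0) tail_ge0. Qed.

Lemma state_after_invariant n : let q := state_after p k.+1 n in
  [/\ forall s t, 0 <= q s t, 0 < q i0 i0, \sum_s \sum_t q s t = 1 &
      potential G0 G1 q <= bound n * q i0 i0].
Proof.
elim: n => [|n [q_ge0 u_gt0 q_sum1 hK]] /=.
  split; [exact: depol_ge0 | exact: p_gt0 | exact: depol_sum1 |].
  rewrite expr0 mul1r mulrDl divfK ?gt_eqF // lerDl.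
  exact: mulr_ge0 tail_ge0 (depol_ge0 _ _).
case: (round_invariant q_ge0 u_gt0 (bound_ge0 n) hK) => q'_ge0 u'_gt0 q'_sum1 hK'.
split => //; suff -> : bound n.+1 = theta * bound n + 4 * c by [].
by rewrite exprS; field; rewrite !gt_eqF ?G0_gt0 // subr_gt0.
Qed.

Lemma fidelity_eventually_close eps : 0 < eps -> 16 * c <= eps * (G0 - G1) ->
  exists N, forall n, (N <= n)%N -> 1 - eps < fidelity (state_after p k.+1 n).
Proof.
move=> eps_gt0 leak_small.
have eta_gt0 : 0 < eps * G0 / (K0 + 1).
  by apply: divr_gt0; [exact: mulr_gt0 eps_gt0 G0_gt0 | move: K0_ge0; lra].
have [N hN] := eventually_expr_le theta_ge0 theta_lt1 eta_gt0.
exists N => n /hN theta_n.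
have [q_ge0 _ q_sum1 hK] := state_after_invariant n.
have := one_sub_fidelity_le G_bounds (bound_ge0 n) q_ge0 q_sum1 hK.
rewrite /fidelity inord0_lbl; set u := state_after p k.+1 n i0 i0 => gap.
have G0_pos := G0_gt0.
have transient : theta ^+ n * K0 < eps * G0.
  apply: le_lt_trans (ler_wpM2r K0_ge0 theta_n) _.
  rewrite -(mulrA (eps * G0)) gtr_pMr; last exact: mulr_gt0 eps_gt0 G0_pos.
  by rewrite mulrC ltr_pdivrMr; move: K0_ge0; lra.
have stationary : 16 * c * G0 / (G0 - G1) <= eps * G0.
  rewrite ler_pdivrMr ?subr_gt0 //.
  by have := ler_wpM2r (ltW G0_pos) leak_small; lra.
have : 2 * G0 * (1 - u) < 2 * G0 * eps by lra.
by rewrite ltr_pM2l; lra.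
Qed.
End Round.

Section Asymptotics.
Variables (R : realType) (p : R).
Local Notation a := ((1 - p) / 8).

Lemma parity_weight_sub m : parity_weight p m 0 - parity_weight p m 1 = (p - a) ^+ m.
Proof. by rewrite /parity_weight /=; field. Qed.

Lemma parity_weight1_ge0 m : 0 <= p - a -> 0 <= a -> 0 <= parity_weight p m 1.
Proof.
move=> B_ge0 a_ge0; rewrite /parity_weight /= divr_ge0 // subr_ge0.
by rewrite lerXn2r ?nnegrE //; lra.
Qed.

Lemma leak_eventually_small delta : 1 / 3 < p -> p <= 1 -> 0 < delta ->
  exists M, forall k, (M <= k)%N -> 16 * (a * (3 * a) ^+ k) <= delta * (p - a) ^+ k.+1.
Proof.
move=> p_gt p_le1 delta_gt0.
have B_gt0 : 0 < p - a by lra.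
have rho_ge0 : 0 <= 3 * a / (p - a) by apply: divr_ge0; lra.
have rho_lt1 : 3 * a / (p - a) < 1 by rewrite ltr_pdivrMr //; lra.
have [M hM] : exists M, forall k, (M <= k)%N -> (3 * a / (p - a)) ^+ k <= 3 * delta / 16.
  by apply: eventually_expr_le; lra.
exists M => k /hM rho_k.
have -> : a * (3 * a) ^+ k = a / (p - a) * (3 * a / (p - a)) ^+ k * (p - a) ^+ k.+1.
  rewrite expr_div_n exprS; field.
  by rewrite expf_neq0 ?gt_eqF //=; lra.
rewrite mulrA ler_pM2r ?exprn_gt0 //.
have aB_ge0 : 0 <= a / (p - a) by apply: divr_ge0; lra.
have aB_le : a / (p - a) <= 1 / 3 by rewrite ler_pdivrMr //; lra.
by have := ler_pM aB_ge0 (exprn_ge0 k rho_ge0) aB_le rho_k; lra.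
Qed.
End Asymptotics.

Unset Implicit Arguments.
Theorem theorem1 (R : realType) (p : R) (hp : 1 / 3 < p) (hp1 : p <= 1) :
  forall eps : R, 0 < eps ->
  exists M : nat, forall m : nat, (M <= m)%N ->
  exists N : nat, forall n : nat, (N <= n)%N ->
    1 - eps < fidelity (state_after p m n).
Proof.
move=> eps eps_gt0.
pose delta := Num.min 2 eps.
have delta_gt0 : 0 < delta by rewrite lt_min eps_gt0 andbT.
have [M hM] := leak_eventually_small hp hp1 delta_gt0.
exists M.+1 => -[//|k] /hM; rewrite -parity_weight_sub => leak_small.
have a_ge0 : 0 <= (1 - p) / 8 by lra.
have B_gt0 : 0 < p - (1 - p) / 8 by lra.
have G1_lt_G0 : parity_weight p k.+1 1 < parity_weight p k.+1 0.
  by rewrite -subr_gt0 parity_weight_sub exprn_gt0.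
have D_gt0 : 0 < parity_weight p k.+1 0 - parity_weight p k.+1 1 by rewrite subr_gt0.
have delta_le2 : delta <= 2 by rewrite ge_min lexx.
have delta_le_eps : delta <= eps by rewrite ge_min lexx orbT.
apply: fidelity_eventually_close => //.
- lra.
- exact: parity_weight1_ge0 (ltW B_gt0) a_ge0.
- by have := ler_wpM2r (ltW D_gt0) delta_le2; lra.
- by have := ler_wpM2r (ltW D_gt0) delta_le_eps; lra.
Qed.
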